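(* Let $0<k<n$ and $d$ be integers. Then $C_{12}>0$ for every allowable critical data set $A_c=(\alpha_c,n_1,d_1,k_1,n_2,d_2,k_2)$ for type $(n,d,k)$ with $k_1=1$.
   Context: Write $d=na-t$ with integers $a,t$, $0\le t<n$, and $ka=l(n-k)+t+m$ with integers $l,m$, $0\le m<n-k$. A critical data set for type $(n,d,k)$ is a tuple $A_c=(\alpha_c,n_1,d_1,k_1,n_2,d_2,k_2)$ with integers $n_i\ge1$, $k_i\ge0$, $d_i$ such that $n_1+n_2=n$, $d_1+d_2=d$, $k_1+k_2=k$, $\frac{d_2}{n_2}>\frac{d_1}{n_1}$, $\frac{k_1}{n_1}>\frac{k_2}{n_2}$, and $\alpha_c=\frac{d_2n_1-d_1n_2}{n_2k_1-n_1k_2}$. It is allowable if moreover $\frac tk<\alpha_c<\frac{ln+t}{k}$, $d\ge\frac1k(n^2-1)-(n-k)$, $d_1\ge\frac1{k_1}(n_1^2-1)-(n_1-k_1)$, and either ($k_2=0$ and $n_2=1$) or ($k_2\ge1$ and $d_2\ge\frac1{k_2}(n_2^2-1)-(n_2-k_2)$). Define $C_{12}=-n_1n_2-d_2n_1+d_1n_2+k_1(d_2+n_2-k_2)$. *)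

From mathcomp Require Import all_boot all_order all_algebra.
Set Implicit Arguments. Unset Strict Implicit. Unset Printing Implicit Defensive.
Import Order.TTheory GRing.Theory Num.Theory.
Local Open Scope ring_scope.

Definition Q (z : int) : rat := z%:~R.

Definition type_aux (n d k a t l m : int) : Prop :=
  [/\ d = n * a - t, 0 <= t < n, k * a = l * (n - k) + t + m & 0 <= m < n - k].

Definition critical_data_set (n d k : int) (alpha : rat)
  (n1 d1 k1 n2 d2 k2 : int) : Prop :=
  [/\ 1 <= n1, 1 <= n2, 0 <= k1 & 0 <= k2] /\
  [/\ n1 + n2 = n, d1 + d2 = d & k1 + k2 = k] /\
  [/\ Q d1 / Q n1 < Q d2 / Q n2,
      Q k2 / Q n2 < Q k1 / Q n1
    & alpha = Q (d2 * n1 - d1 * n2) / Q (n2 * k1 - n1 * k2)].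

Definition deg_bound (n d k : int) : Prop :=
  Q (n ^+ 2 - 1) / Q k - Q (n - k) <= Q d.

(* Allowable critical data set (t, l are the auxiliary integers of the type). *)
Definition allowable (n d k t l : int) (alpha : rat)
  (n1 d1 k1 n2 d2 k2 : int) : Prop :=
  [/\ critical_data_set n d k alpha n1 d1 k1 n2 d2 k2,
      Q t / Q k < alpha < Q (l * n + t) / Q k,
      deg_bound n d k,
      deg_bound n1 d1 k1
    & (k2 = 0 /\ n2 = 1) \/ (1 <= k2 /\ deg_bound n2 d2 k2)].

Definition C12 (n1 d1 k1 n2 d2 k2 : int) : int :=
  - n1 * n2 - d2 * n1 + d1 * n2 + k1 * (d2 + n2 - k2).

From mathcomp Require Import all_boot all_order all_algebra.
From mathcomp Require Import zify ring.
Import Order.TTheory GRing.Theory Num.Theory.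
Local Open Scope ring_scope.

(* Write q := l + a, so that d - q (n - k) = m >= 0, and shift the degrees by the
   "slope" q: x := d1 - q (n1 - 1), y := d2 - q (n2 - k2).  Then x + y >= 0, the
   upper bound on alpha_c becomes y < k2 x (hence x >= 1), and
   C12 = n2 (x - n1 + 1) - (n1 - 1) y + k2 (q (n1 - 1) - 1).  For k2 = 0 (so n2 = 1)
   this is visibly positive; for k2 >= 1 the degree bound on (n2, d2, k2) bounds
   k2 q from below, and multiplying by n2 - k2 > 0 makes C12 a sum of nonnegative
   terms plus a positive one. *)

Lemma ltr_Qdiv (a b c e : int) :
  0 < b -> 0 < e -> (Q a / Q b < Q c / Q e) = (a * e < c * b).
Proof.
move=> hb he.
by rewrite ltr_pdivrMr ?ltr0z // mulrAC ltr_pdivlMr ?ltr0z // /Q -!rmorphM ltr_int.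
Qed.

Lemma deg_bound_int (n d k : int) :
  0 < k -> deg_bound n d k -> n ^+ 2 - 1 <= (d + (n - k)) * k.
Proof.
move=> hk.
by rewrite /deg_bound lerBlDr ler_pdivrMr ?ltr0z // /Q -rmorphD -rmorphM ler_int.
Qed.

Lemma type_aux_quotient (n d k a t l m : int) :
  type_aux n d k a t l m ->
  (l + a) * (n - k) <= d /\ l * n + t = (l + a) * n - d.
Proof.
move=> [-> /andP[_ _] hka /andP[hm _]]; split; last by ring.
have -> : n * a - t = (l + a) * (n - k) + (k * a - l * (n - k) - t) by ring.
by rewrite hka lerDl; lia.
Qed.

Lemma slope_lt_quotient (n1 d1 n2 d2 k2 q : int) :
  0 < n1 + n2 -> 0 < n2 - n1 * k2 -> 0 < 1 + k2 ->
  Q (d2 * n1 - d1 * n2) / Q (n2 - n1 * k2) < Q (q * (n1 + n2) - (d1 + d2)) / Q (1 + k2) ->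
  d2 - k2 * d1 < (n2 - n1 * k2) * q.
Proof.
move=> hn hE hk; rewrite ltr_Qdiv // -subr_gt0.
have -> : (q * (n1 + n2) - (d1 + d2)) * (n2 - n1 * k2) - (d2 * n1 - d1 * n2) * (1 + k2)
    = (n1 + n2) * ((n2 - n1 * k2) * q - (d2 - k2 * d1)) by ring.
by rewrite pmulr_rgt0 // subr_gt0.
Qed.

Lemma shifted_C12_gt0 (n1 n2 k2 q x y : int) :
  1 <= n1 -> 1 <= k2 -> n1 * k2 < n2 -> 1 <= x -> y < k2 * x ->
  n2 ^+ 2 - 1 <= (y + (q + 1) * (n2 - k2)) * k2 ->
  0 < n2 * (x - n1 + 1) - (n1 - 1) * y + k2 * (q * (n1 - 1) - 1).
Proof.
move=> hn1 hk2 hn2 hx hy hdeg.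
set C := n2 * (x - n1 + 1) - (n1 - 1) * y + k2 * (q * (n1 - 1) - 1).
have hE : 0 < n2 - k2 by nia.
suff : 0 < (n2 - k2) * C by rewrite pmulr_rgt0.
have hq : k2 * q * (n2 - k2) >= n2 * (n2 - k2) + k2 - 1 - k2 ^+ 2 * (x - 1) by nia.
have hCy : C >= x * (n2 - n1 * k2 + k2) - (n1 - 1) * (n2 - 1) + k2 * q * (n1 - 1) - k2.
  by rewrite /C; nia.
have hCyE : 0 <= (n2 - k2) *
    (C - (x * (n2 - n1 * k2 + k2) - (n1 - 1) * (n2 - 1) + k2 * q * (n1 - 1) - k2)).
  by apply: mulr_ge0; lia.
have hqN : (n1 - 1) * (k2 * q * (n2 - k2))
    >= (n1 - 1) * (n2 * (n2 - k2) + k2 - 1 - k2 ^+ 2 * (x - 1)).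
  by apply: ler_wpM2l; lia.
have hEk : (n2 - k2) * (n2 - n1 * k2 + k2) >= ((n1 - 1) * k2 + 1) * (k2 + 1).
  by apply: ler_pM; nia.
have hx1 : 0 <= (x - 1) * ((n2 - k2) * (n2 - n1 * k2 + k2) - (n1 - 1) * k2 ^+ 2).
  by apply: mulr_ge0; [lia | rewrite subr_ge0; apply: le_trans hEk; nia].
nia.
Qed.

Lemma C12_k1_gt0 (n1 d1 n2 d2 k2 q : int) :
  1 <= n1 -> 0 <= k2 -> k2 * n1 < n2 ->
  q * (n1 + n2 - (1 + k2)) <= d1 + d2 ->
  d2 - k2 * d1 < (n2 - n1 * k2) * q ->
  (k2 = 0 /\ n2 = 1) \/ (1 <= k2 /\ n2 ^+ 2 - 1 <= (d2 + (n2 - k2)) * k2) ->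
  0 < C12 n1 d1 1 n2 d2 k2.
Proof.
move=> hn1 hk2 hn2 hdq hslope hcases.
set x := d1 - q * (n1 - 1); set y := d2 - q * (n2 - k2).
have hxy : 0 <= x + y by rewrite /x /y; lia.
have hy : y < k2 * x by rewrite /x /y; lia.
have hx : 1 <= x.
  have hx' : x * (1 + k2) = x + y - (y - k2 * x) by ring.
  have : 0 < x * (1 + k2) by rewrite hx'; lia.
  nia.
have -> : C12 n1 d1 1 n2 d2 k2
    = n2 * (x - n1 + 1) - (n1 - 1) * y + k2 * (q * (n1 - 1) - 1).
  by rewrite /C12 /x /y; ring.
case: hcases => [[hk0 hn21] | [hk21 hdeg]].
  by move: hy; rewrite hk0 hn21 mul0r; nia.
apply: shifted_C12_gt0 => //; first lia.
by move: hdeg; rewrite /y; congr (_ <= _); ring.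
Qed.

Theorem proposition5p5 (n d k : int) :
  0 < k -> k < n ->
  forall a t l m : int, type_aux n d k a t l m ->
  forall (alpha : rat) (n1 d1 k1 n2 d2 k2 : int),
    allowable n d k t l alpha n1 d1 k1 n2 d2 k2 ->
    k1 = 1 ->
    0 < C12 n1 d1 k1 n2 d2 k2.
Proof.
move=> hk _ a t l m haux alpha n1 d1 k1 n2 d2 k2.
move=> [[[hn1 hn2 _ hk2] [[hn hd hk12] [_ hkslope ->]]] /andP[_ halpha] _ _ hb2] hk1.
subst k1 n d k.
have {}hkslope : k2 * n1 < 1 * n2 by rewrite -ltr_Qdiv //; lia.
move/type_aux_quotient: haux => [hdq hlt].
rewrite hlt mulr1 in halpha.
apply: (@C12_k1_gt0 _ _ _ _ _ (l + a)) => //.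
- by rewrite mul1r in hkslope.
- by apply: slope_lt_quotient halpha; lia.
- case: hb2 => [|[hk21 hdeg]]; first by left.
  by right; split; last apply: deg_bound_int hdeg; lia.
Qed.
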